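(* Let $n$ be a positive integer, $Q \in \{L,R\}$ and $X \in \mathcal{RB}_n$. Suppose there is a positive integer $i$ with $XQ^i \notin \mathcal{RB}_n$, and let $i$ be the least such positive integer. Then $i \leq n$.
   Context: $L = \begin{pmatrix} 1 & 0 \\ 1 & 1\end{pmatrix}$, $R = \begin{pmatrix} 1 & 1 \\ 0 & 1\end{pmatrix}$. For a positive integer $n$, $\mathcal{D}_n$ is the set of $2\times 2$ matrices $A$ with nonnegative integer entries, $\det A = n$, and the greatest common divisor of all entries of $A$ equal to $1$. $\mathcal{RB}_n = \left\{ \begin{pmatrix} a & b \\ c & d\end{pmatrix} \in \mathcal{D}_n : a > c \text{ and } d > b\right\}$. *)

From mathcomp Require Import all_boot.
Set Implicit Arguments. Unset Strict Implicit. Unset Printing Implicit Defensive.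

Record mat2 := Mat2 { ma : nat; mb : nat; mc : nat; md : nat }.

Definition mmul (X Y : mat2) : mat2 :=
  Mat2 (ma X * ma Y + mb X * mc Y) (ma X * mb Y + mb X * md Y)
       (mc X * ma Y + md X * mc Y) (mc X * mb Y + md X * md Y).

Definition Lm : mat2 := Mat2 1 0 1 1.
Definition Rm : mat2 := Mat2 1 1 0 1.

Fixpoint mpow (Q : mat2) (i : nat) : mat2 :=
  match i with 0 => Mat2 1 0 0 1 | i'.+1 => mmul (mpow Q i') Q end.

(* det X = n, written over nat as a*d = b*c + n (equivalent to ad - bc = n in Z) *)
Definition in_D (n : nat) (X : mat2) : Prop :=
  ma X * md X = mb X * mc X + n /\
  gcdn (gcdn (ma X) (mb X)) (gcdn (mc X) (md X)) = 1.

Definition in_RB (n : nat) (X : mat2) : Prop :=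
  in_D n X /\ mc X < ma X /\ mb X < md X.

From mathcomp Require Import all_boot.
From mathcomp Require Import zify.

(* For X = (a b; c d) in RB_n we have X R^j = (a, b + j a; c, d + j c), which stays in
   RB_n only while j (a - c) < d - b; and n = a d - b c = a (d - b) + b (a - c) >= d - b.
   Hence X R^n already leaves RB_n; symmetrically for L, with X L^j = (a + j b, b; c + j d, d)
   and n = d (a - c) + c (d - b) >= a - c. *)

Lemma mpow_Rm j : mpow Rm j = Mat2 1 j 0 1.
Proof. by elim: j => [|j IH] //=; rewrite IH /mmul /=; congr Mat2; lia. Qed.

Lemma mpow_Lm j : mpow Lm j = Mat2 1 0 j 1.
Proof. by elim: j => [|j IH] //=; rewrite IH /mmul /=; congr Mat2; lia. Qed.

Lemma in_RB_md_sub_mb_le {n X} : in_RB n X -> md X - mb X <= n.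
Proof. by case: X => a b c d [[/= det _] /= [ca bd]]; nia. Qed.

Lemma in_RB_ma_sub_mc_le {n X} : in_RB n X -> ma X - mc X <= n.
Proof. by case: X => a b c d [[/= det _] /= [ca bd]]; nia. Qed.

Lemma in_RB_mul_mpowR_lt {n X j} :
  mc X < ma X -> in_RB n (mmul X (mpow Rm j)) -> j < md X - mb X.
Proof.
by case: X => a b c d /= ca; rewrite mpow_Rm /mmul => -[_ /= [_ ord]]; nia.
Qed.

Lemma in_RB_mul_mpowL_lt {n X j} :
  mb X < md X -> in_RB n (mmul X (mpow Lm j)) -> j < ma X - mc X.
Proof.
by case: X => a b c d /= bd; rewrite mpow_Lm /mmul => -[_ /= [ord _]]; nia.
Qed.

Lemma in_RB_mul_mpow_lt {n Q X j} : Q = Lm \/ Q = Rm ->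
  in_RB n X -> in_RB n (mmul X (mpow Q j)) -> j < n.
Proof.
move=> [->|->] XRB XQRB; have [_ [ca bd]] := XRB.
- exact: leq_trans (in_RB_mul_mpowL_lt bd XQRB) (in_RB_ma_sub_mc_le XRB).
- exact: leq_trans (in_RB_mul_mpowR_lt ca XQRB) (in_RB_md_sub_mb_le XRB).
Qed.

Theorem lemma16 (n : nat) (Q X : mat2) (i : nat) :
  0 < n -> (Q = Lm \/ Q = Rm) -> in_RB n X ->
  0 < i -> ~ in_RB n (mmul X (mpow Q i)) ->
  (forall j, 0 < j -> j < i -> in_RB n (mmul X (mpow Q j))) ->
  i <= n.
Proof.
move=> n_gt0 HQ XRB _ _ below_i.
rewrite leqNgt; apply/negP => n_lt_i.
by have := in_RB_mul_mpow_lt HQ XRB (below_i n n_gt0 n_lt_i); rewrite ltnn.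
Qed.
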